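(* Let $X=X_1\times\dots\times X_n$ with $|X_i|=2$ for every $i\in N$, and let $\langle\mathcal A,\mathcal U\rangle$ be a twofold partition of $X$ satisfying the standing assumptions. Then the following are equivalent: (a) $\langle\mathcal A,\mathcal U\rangle$ has a representation in Model $F^{c}$; (b) it has a representation in Model $F$; (c) it has a representation in Model $E$.
   Context: Setting. $N=\{1,\dots,n\}$, $n\ge 2$; $X=X_1\times\dots\times X_n$ with each $X_i$ finite. $(y_i,x_{-i})$ denotes $x$ with $i$-th coordinate replaced by $y_i$. A twofold partition $\langle\mathcal A,\mathcal U\rangle$ of $X$: disjoint, union $X$. Standing assumptions: every attribute $i$ is influential (exist $x_i,y_i,a_{-i}$ with $(x_i,a_{-i})\in\mathcal A$, $(y_i,a_{-i})\in\mathcal U$), and $\succsim_i$ on $X_i$, defined by $x_i\succsim_i y_i$ iff [for all $a_{-i}$, $(y_i,a_{-i})\in\mathcal A\Rightarrow(x_i,a_{-i})\in\mathcal A$], is antisymmetric. Semiorders: a semiorder on $Y$ is a reflexive, Ferrers ($xSy, zSw\Rightarrow xSw$ or $zSy$) and semitransitive ($xSy, ySz\Rightarrow xSw$ or $wSz$) relation; its induced weak order is $x S^{wo} y$ iff for all $z$, [$ySz\Rightarrow xSz$] and [$zSx\Rightarrow zSy$]. Common data of Models $E$ and $F$: for each $i$ a semiorder $S_i$ on $X_i$ (asymmetric part $P_i$) and a semiorder $U_i$ whose asymmetric part $V_i\subseteq P_i$, with $S_i^{wo}\cap U_i^{wo}$ complete; an up-closed family $\mathcal F\subseteq 2^N$;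 the relation $xSy$ iff $\{i:x_iS_iy_i\}\in\mathcal F$ and $\{i:y_iV_ix_i\}=\varnothing$, with asymmetric part $P$; a set $\mathcal P\subseteq X$ with no $p,q\in\mathcal P$ satisfying $pPq$. Model $E$: for all $x$, $x\in\mathcal A$ iff [$xSp$ for some $p\in\mathcal P$ and not $qPx$ for all $q\in\mathcal P$]. Model $F$: for all $x$, $x\in\mathcal U$ iff [$pPx$ for some $p\in\mathcal P$ and not $xPq$ for all $q\in\mathcal P$]. $F^{c}$: $F$ with a representation in which all $V_i$ are empty. *)

From mathcomp Require Import all_boot.
Set Implicit Arguments. Unset Strict Implicit. Unset Printing Implicit Defensive.

Section Defs.
Variables (n : nat) (T : 'I_n -> finType).

Definition prof := {dffun forall i : 'I_n, T i}.

Definition upd (x : prof) (i : 'I_n) (y : T i) : prof :=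
  [ffun j => dfwith (fun k => x k) y j].

Section Rel.
Variable Y : Type.
Implicit Types R : Y -> Y -> Prop.
Definition asym_part R : Y -> Y -> Prop := fun x y => R x y /\ ~ R y x.
Definition is_semiorder R : Prop :=
  [/\ (forall x, R x x),
      (forall x y z w, R x y -> R z w -> R x w \/ R z y) &
      (forall x y z w, R x y -> R y z -> R x w \/ R w z)].
Definition induced_wo R : Y -> Y -> Prop :=
  fun x y => forall z, (R y z -> R x z) /\ (R z x -> R z y).
Definition complete_rel R : Prop := forall x y, R x y \/ R y x.
End Rel.

Definition influential (A : {set prof}) : Prop :=
  forall i : 'I_n, exists (xi yi : T i) (a : prof),
    upd a xi \in A /\ upd a yi \notin A.

Definition pref_i (A : {set prof}) (i : 'I_n) (xi yi : T i) : Prop :=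
  forall a : prof, upd a yi \in A -> upd a xi \in A.

Definition standing (A : {set prof}) : Prop :=
  influential A /\
  forall i (xi yi : T i), pref_i A xi yi -> pref_i A yi xi -> xi = yi.

Variables (S U : forall i : 'I_n, rel (T i)) (F : {set {set 'I_n}})
          (PP : {set prof}).

Definition Pi i : T i -> T i -> Prop := asym_part (fun a b : T i => S a b).
Definition Vi i : T i -> T i -> Prop := asym_part (fun a b : T i => U a b).

Definition Srel (x y : prof) : Prop :=
  [set i | S (x i) (y i)] \in F /\ (forall i, ~ Vi (y i) (x i)).
Definition Prel : prof -> prof -> Prop := asym_part Srel.

Definition common_data : Prop :=
  [/\ (forall i, is_semiorder (fun a b : T i => S a b)),
       (forall i, is_semiorder (fun a b : T i => U a b)),
       (forall i (a b : T i), Vi a b -> Pi a b),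
       (forall i, complete_rel (fun a b : T i =>
          induced_wo (fun c d : T i => S c d) a b /\
          induced_wo (fun c d : T i => U c d) a b)) &
       (forall B C : {set 'I_n}, B \in F -> B \subset C -> C \in F) /\
       (forall p q, p \in PP -> q \in PP -> ~ Prel p q)].

Definition modelE_eq (A : {set prof}) : Prop :=
  forall x, x \in A <->
    ((exists2 p, p \in PP & Srel x p) /\ (forall q, q \in PP -> ~ Prel q x)).

(* x in U (= complement of A) iff ... *)
Definition modelF_eq (A : {set prof}) : Prop :=
  forall x, x \notin A <->
    ((exists2 p, p \in PP & Prel p x) /\ (forall q, q \in PP -> ~ Prel x q)).

Definition all_V_empty : Prop := forall i (a b : T i), ~ Vi a b.
End Defs.

Definition repr_E n (T : 'I_n -> finType) (A : {set prof T}) : Prop :=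
  exists S U F PP, common_data S U F PP /\ modelE_eq S U F PP A.
Definition repr_F n (T : 'I_n -> finType) (A : {set prof T}) : Prop :=
  exists S U F PP, common_data S U F PP /\ modelF_eq S U F PP A.
Definition repr_Fc n (T : 'I_n -> finType) (A : {set prof T}) : Prop :=
  exists S U F PP, [/\ common_data S U F PP, all_V_empty U & modelF_eq S U F PP A].

From mathcomp Require Import all_boot.
Set Implicit Arguments. Unset Strict Implicit. Unset Printing Implicit Defensive.

(* On a two-element set a semiorder is just a complete preorder, and the
   inclusion of V_i in P_i makes the veto conditions monotone under
   coordinatewise improvement of a profile.  Hence in Model E as well as in
   Model F the set A is an up-set for the dominance order induced by the S_i.
   Conversely, a nonempty up-set is represented in Model E and in Model F^c by
   the single reference profile p made of S_i-maximal values, no vetoes (U_i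
   total), and F the family of coalitions containing {i | x_i S_i p_i} for some
   x in A: then p S x always holds, while x S p holds exactly when x is in A. *)

Section Semiorder.
Variable Y : Type.
Implicit Type R : Y -> Y -> Prop.

Lemma semiorder_complete R : is_semiorder R -> complete_rel R.
Proof. by case=> refl ferrers _ x y; case: (ferrers x x y y (refl x) (refl y)); auto. Qed.

Lemma asym_part_irrefl R x : ~ asym_part R x x.
Proof. by case. Qed.

Lemma induced_wo_complete R :
  (forall y x z, R x y -> R y z -> R x z) -> complete_rel R ->
  complete_rel (induced_wo R).
Proof.
move=> trans compl x y.
have wo u v : R u v -> induced_wo R u v.
  by move=> uv z; split=> h; [apply: trans h | apply: trans uv].
by case: (compl x y) => h; [left | right]; apply: wo.
Qed.

End Semiorder.

Section TwoElements.
Variables (X : finType) (s u : rel X).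
Hypothesis X2 : #|X| = 2.

Local Notation V := (asym_part (fun a b => u a b)).
Local Notation P := (asym_part (fun a b => s a b)).

Lemma card2_collide (a b c : X) : [\/ a = b, b = c | a = c].
Proof.
have [->|ab] := eqVneq a b; first exact: Or31.
have [->|bc] := eqVneq b c; first exact: Or32.
have [->|ac] := eqVneq a c; first exact: Or33.
have abc : uniq [:: a; b; c] by rewrite /= !inE negb_or ab ac bc.
by have := max_card (mem [:: a; b; c]); rewrite (card_uniqP abc) X2.
Qed.

Lemma card2_trans : reflexive s -> transitive s.
Proof. by move=> refl b a c; case: (card2_collide a b c) => -> // _ _; apply: refl. Qed.

Lemma card2_top : is_semiorder (fun a b => s a b) -> exists t, [forall b, s t b].
Proof.
move=> semi; have [refl _ _] := semi.
have /card_gt0P [a _] : 0 < #|X| by rewrite X2.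
have [a_top|/forallPn [b not_ab]] := boolP [forall b, s a b]; first by exists a.
have ba : s b a by case: (semiorder_complete semi a b) => // ab; rewrite ab in not_ab.
exists b; apply/forallP => c.
by case: (card2_collide a b c) => [ab|<-|<-] //; rewrite ab refl in not_ab.
Qed.

Lemma card2_le_of_top t x y :
  reflexive s -> (forall b, s t b) -> (s y t -> s x t) -> s x y.
Proof.
move=> refl top.
case: (card2_collide x y t) => [->|->|->] yx; first exact: refl.
- by apply: yx; apply: refl.
- exact: top.
Qed.

Hypothesis VP : forall a b, V a b -> P a b.

Lemma card2_notV_up z x q : s z x -> ~ V q x -> ~ V q z.
Proof.
move=> zx not_qx qz.
case: (card2_collide q z x) => [e|e|e]; subst.
- exact: asym_part_irrefl qz.
- exact: not_qx.
- by case: (VP qz).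
Qed.

Lemma card2_notV_down z x q : s z x -> ~ V z q -> ~ V x q.
Proof.
move=> zx not_zq xq.
case: (card2_collide x z q) => [e|e|e]; subst.
- exact: not_zq.
- by case: (VP xq).
- exact: asym_part_irrefl xq.
Qed.

End TwoElements.

Definition dominates n (T : 'I_n -> finType) (S : forall i, rel (T i)) (z x : prof T) :=
  forall i, S i (z i) (x i).

Definition upset n (T : 'I_n -> finType) (S : forall i, rel (T i)) (A : {set prof T}) :=
  forall x z, dominates S z x -> x \in A -> z \in A.

Definition semiorder_upset n (T : 'I_n -> finType) (A : {set prof T}) :=
  exists S : forall i, rel (T i),
    (forall i, is_semiorder (fun a b : T i => S i a b)) /\ upset S A.

Section Dominance.
Variables (n : nat) (T : 'I_n -> finType) (S U : forall i, rel (T i)).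
Variable F : {set {set 'I_n}}.
Hypothesis T2 : forall i, #|T i| = 2.
Hypothesis S_refl : forall i (a : T i), S a a.
Hypothesis VP : forall i (a b : T i), Vi U a b -> Pi S a b.
Hypothesis F_up : forall B C : {set 'I_n}, B \in F -> B \subset C -> C \in F.

Lemma Srel_dominates_l z x q : dominates S z x -> Srel S U F x q -> Srel S U F z q.
Proof.
move=> zx [xq notV]; split.
- apply: F_up xq _; apply/subsetP => i; rewrite !inE => xqi.
  exact: (card2_trans (T2 i) (@S_refl i) (zx i) xqi).
- move=> i.
  exact: (card2_notV_up (s := @S i) (u := @U i) (T2 i) (@VP i) (zx i) (notV i)).
Qed.

Lemma Srel_dominates_r z x q : dominates S z x -> Srel S U F q z -> Srel S U F q x.
Proof.
move=> zx [qz notV]; split.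
- apply: F_up qz _; apply/subsetP => i; rewrite !inE => qzi.
  exact: (card2_trans (T2 i) (@S_refl i) qzi (zx i)).
- move=> i.
  exact: (card2_notV_down (s := @S i) (u := @U i) (T2 i) (@VP i) (zx i) (notV i)).
Qed.

Lemma Prel_dominates_l z x q : dominates S z x -> Prel S U F x q -> Prel S U F z q.
Proof.
move=> zx [xq not_qx]; split; first exact: Srel_dominates_l zx xq.
by move=> qz; apply: not_qx; exact: Srel_dominates_r zx qz.
Qed.

Lemma Prel_dominates_r z x q : dominates S z x -> Prel S U F q z -> Prel S U F q x.
Proof.
move=> zx [qz not_zq]; split; first exact: Srel_dominates_r zx qz.
by move=> xq; apply: not_zq; exact: Srel_dominates_l zx xq.
Qed.

End Dominance.

Section ModelsAreUpsets.
Variables (n : nat) (T : 'I_n -> finType) (S U : forall i, rel (T i)).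
Variables (F : {set {set 'I_n}}) (PP A : {set prof T}).
Hypothesis T2 : forall i, #|T i| = 2.
Hypothesis data : common_data S U F PP.

Let S_refl i (a : T i) : S a a.
Proof. by case: data => /(_ i) []. Qed.

Let VP i (a b : T i) : Vi U a b -> Pi S a b.
Proof. by case: data => _ _ VP _ _; apply: VP. Qed.

Let F_up (B C : {set 'I_n}) : B \in F -> B \subset C -> C \in F.
Proof. by case: data => _ _ _ _ [F_up _]; apply: F_up. Qed.

Lemma modelF_upset : modelF_eq S U F PP A -> upset S A.
Proof.
move=> model x z zx xA; apply/negPn/negP => zA.
have [[p pPP pz] no_zq] := (model z).1 zA.
suff : x \notin A by rewrite xA.
apply/(model x).2; split.
- exists p => //; exact: (Prel_dominates_r T2 S_refl VP F_up zx pz).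
- move=> q qPP xq; apply: (no_zq q qPP).
  exact: (Prel_dominates_l T2 S_refl VP F_up zx xq).
Qed.

Lemma modelE_upset : modelE_eq S U F PP A -> upset S A.
Proof.
move=> model x z zx xA; have [[p pPP xp] no_qx] := (model x).1 xA.
apply/(model z).2; split.
- exists p => //; exact: (Srel_dominates_l T2 S_refl VP F_up zx xp).
- move=> q qPP qz; apply: (no_qx q qPP).
  exact: (Prel_dominates_r T2 S_refl VP F_up zx qz).
Qed.

End ModelsAreUpsets.

Section Construction.
Variables (n : nat) (T : 'I_n -> finType) (A : {set prof T}) (S : forall i, rel (T i)).
Variable a0 : prof T.
Hypothesis T2 : forall i, #|T i| = 2.
Hypothesis S_semi : forall i, is_semiorder (fun a b : T i => S a b).
Hypothesis A_up : upset S A.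
Hypothesis a0A : a0 \in A.

Let S_refl i (a : T i) : S a a.
Proof. by case: (S_semi i). Qed.

Definition top : prof T := [ffun i => xchoose (card2_top (T2 i) (S_semi i))].

Lemma topP i (b : T i) : S (top i) b.
Proof. by rewrite ffunE; apply: (forallP (xchooseP (card2_top (T2 i) (S_semi i)))). Qed.

Definition top_coalition (x : prof T) := [set i | S (x i) (top i)].

Definition top_family :=
  [set B : {set 'I_n} | [exists y in A, top_coalition y \subset B]].

Lemma mem_top_family x : (top_coalition x \in top_family) = (x \in A).
Proof.
apply/idP/idP => [|xA]; last by rewrite inE; apply/existsP; exists x; rewrite xA subxx.
rewrite inE => /existsP [y /andP [yA sub]]; apply: A_up yA => i.
apply: (card2_le_of_top (T2 i) (@S_refl i) (@topP i)) => yi_top.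
by have := subsetP sub i; rewrite !inE; apply.
Qed.

Definition no_veto i : rel (T i) := fun _ _ => true.

Lemma Vi_no_veto i (a b : T i) : ~ Vi no_veto a b.
Proof. by case. Qed.

Local Notation Srel0 := (Srel S no_veto top_family).
Local Notation Prel0 := (Prel S no_veto top_family).

Lemma Srel_top x : Srel0 top x.
Proof.
split=> [|i]; last exact: Vi_no_veto.
have -> : [set i | S (top i) (x i)] = setT by apply/setP => i; rewrite !inE topP.
by rewrite inE; apply/existsP; exists a0; rewrite a0A subsetT.
Qed.

Lemma Srel_to_top x : Srel0 x top <-> x \in A.
Proof.
rewrite -mem_top_family; split=> [[] // | xA].
by split=> // i; apply: Vi_no_veto.
Qed.

Lemma Prel_from_top x : Prel0 top x <-> x \notin A.
Proof.
split=> [[_ not_xtop] | xA]; first by apply/negP => /Srel_to_top.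
by split=> [|/Srel_to_top]; [apply: Srel_top | apply/negP].
Qed.

Lemma not_Prel_to_top x : ~ Prel0 x top.
Proof. by case=> _ []; apply: Srel_top. Qed.

Lemma top_common_data : common_data S no_veto top_family [set top].
Proof.
split.
- exact: S_semi.
- by move=> i; split=> // *; left.
- by move=> i a b /Vi_no_veto.
- move=> i a b.
  have [wo|wo] := induced_wo_complete (card2_trans (T2 i) (@S_refl i))
                    (semiorder_complete (S_semi i)) a b.
  + by left; split=> // z.
  + by right; split=> // z.
- split=> [B C | p q /set1P -> /set1P ->]; last exact: not_Prel_to_top.
  rewrite !inE => /existsP [y /andP [yA sub]] BC.
  by apply/existsP; exists y; rewrite yA (subset_trans sub BC).
Qed.

Lemma upset_repr_Fc : repr_Fc A.
Proof.
exists S, no_veto, top_family, [set top].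
split; [exact: top_common_data | exact: Vi_no_veto |].
move=> x; split=> [xA | [[p /set1P -> /Prel_from_top //]]].
split; first by exists top; [apply: set11 | apply/Prel_from_top].
by move=> q /set1P ->; apply: not_Prel_to_top.
Qed.

Lemma upset_repr_E : repr_E A.
Proof.
exists S, no_veto, top_family, [set top]; split; first exact: top_common_data.
move=> x; split=> [xA | [[p /set1P -> /Srel_to_top //]]].
split; first by exists top; [apply: set11 | apply/Srel_to_top].
by move=> q /set1P -> /Prel_from_top; rewrite xA.
Qed.

End Construction.

Lemma repr_F_upset n (T : 'I_n -> finType) (A : {set prof T}) :
  (forall i, #|T i| = 2) -> repr_F A -> semiorder_upset A.
Proof.
move=> T2 [S [U [F [PP [data model]]]]]; exists S; split; first by case: data.
exact: modelF_upset T2 data model.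
Qed.

Lemma repr_E_upset n (T : 'I_n -> finType) (A : {set prof T}) :
  (forall i, #|T i| = 2) -> repr_E A -> semiorder_upset A.
Proof.
move=> T2 [S [U [F [PP [data model]]]]]; exists S; split; first by case: data.
exact: modelE_upset T2 data model.
Qed.

Lemma repr_Fc_F n (T : 'I_n -> finType) (A : {set prof T}) : repr_Fc A -> repr_F A.
Proof. by case=> S [U [F [PP [data _ model]]]]; exists S, U, F, PP. Qed.

Theorem proposition3 (n : nat) (T : 'I_n -> finType) (A : {set prof T}) :
  2 <= n ->
  (forall i, #|T i| = 2) ->
  standing A ->
  (repr_Fc A <-> repr_F A) /\ (repr_F A <-> repr_E A).
Proof.
move=> n2 T2 [influential_A _].
have [xi [_ [a [aA _]]]] := influential_A (Ordinal (ltnW n2)).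
have upset_repr : semiorder_upset A -> repr_Fc A /\ repr_E A.
  case=> S [S_semi A_up]; split.
  - exact: upset_repr_Fc T2 S_semi A_up aA.
  - exact: upset_repr_E T2 S_semi A_up aA.
have F_upset := repr_F_upset T2; have E_upset := repr_E_upset T2.
split; split.
- exact: repr_Fc_F.
- by move/F_upset/upset_repr => [].
- by move/F_upset/upset_repr => [].
- by move/E_upset/upset_repr => [/repr_Fc_F].
Qed.
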